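(* Let $a>b\ge1$ be coprime positive integers and $\alpha_b,\alpha_{b+1},\dots,\alpha_a$ integers with $|\alpha_b|=1$. For each $N\in\mathbb N$ consider the equation $$m^a=\sum_{j=b}^a\alpha_jn^jN^{a-j}$$ in positive integers $m$. Then for every $\delta>0$ there exist $N_\delta$ and sets $\Gamma_{N,\delta}\subset[1,N]$ of cardinality at most $\delta N$ such that for all $N>N_\delta$ and all integers $n\in[1,N]\setminus\Gamma_{N,\delta}$ there is no positive integer $m$ satisfying this equation. *)

From HB Require Import structures.
From mathcomp Require Import all_boot all_order all_algebra.
Set Implicit Arguments. Unset Strict Implicit. Unset Printing Implicit Defensive.
Import Order.TTheory GRing.Theory Num.Theory.
Local Open Scope ring_scope.

Definition rhs (a b : nat) (alpha : nat -> int) (n N : nat) : int :=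
  \sum_(b <= j < a.+1) alpha j * (n%:Z) ^+ j * (N%:Z) ^+ (a - j).

From HB Require Import structures.
From mathcomp Require Import all_boot all_order all_algebra.
From mathcomp Require Import zify ring.
Import Order.TTheory GRing.Theory Num.Theory.
Set Implicit Arguments. Unset Strict Implicit. Unset Printing Implicit Defensive.

(* Let m^a = sum_{j=b}^{a} alpha_j n^j N^(a-j) with 1 <= n <= N and
   m > 0.  Put g = gcd(n, N), n = n'g, N = N'g.  Then the right-hand side is
   g^a n'^b P with P = alpha_b N'^(a-b) + n' Q; since |alpha_b| = 1 and
   gcd(n', N') = 1, P is coprime to n'.  Comparing p-adic valuations in
   m^a = g^a n'^b P and using gcd(a, b) = 1 shows that a divides every
   valuation of n', i.e. n' = n / gcd(n, N) is an a-th power.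
   Hence solvable n lie in the "exceptional" set of those n whose quotient by
   gcd(n, N) is an a-th power.  Such an n is determined by the pair
   (gcd(n, N), n / gcd(n, N)): a divisor of N and an a-th power w^a <= N, so
   w^2 <= N.  With d(N) the number of divisors, the exceptional set has at most
   d(N) sqrt(N) elements; the elementary bound d(N)^3 <= 8^8 N then gives
   #exceptional^6 <= 8^16 N^5, which is below (delta N)^6 for N large. *)

Lemma PoszX m k : Posz (m ^ k) = (Posz m ^+ k)%R.
Proof. by rewrite -!natz natrX. Qed.

Lemma pow_of_valuations a x : (0 < a)%N -> (0 < x)%N ->
  (forall q, prime q -> a %| logn q x)%N -> exists w, x = (w ^ a)%N.
Proof.
move=> a_gt0 x_gt0 a_dvd_logn.
exists (\prod_(q <- primes x) q ^ (logn q x %/ a))%N.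
rewrite (big_morph (expn^~ a) (fun u v => expnMn u v a) (exp1n a)).
rewrite {1}(prod_prime_decomp x_gt0) prime_decompE big_map /=.
apply: eq_big_seq => q; rewrite mem_primes => /andP[q_prime _].
by rewrite -expnM divnK // a_dvd_logn.
Qed.

(* Valuation argument: if m^a = g^a x^b y with x coprime to y and gcd(a,b) = 1,
   then a divides b * v_q(x) for every prime q | x, so x is an a-th power. *)
Lemma pow_factor_is_pow a b m g x y : (0 < a)%N -> coprime a b ->
  (0 < g)%N -> (0 < x)%N -> (0 < y)%N -> coprime x y ->
  (m ^ a = g ^ a * x ^ b * y)%N -> exists w, x = (w ^ a)%N.
Proof.
move=> a_gt0 co_ab g_gt0 x_gt0 y_gt0 co_xy eq_m.
apply: pow_of_valuations => // q q_prime.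
have [q_dvd_x | q_ndvd_x] := boolP (q %| x)%N; last first.
  by rewrite logn_coprime ?dvdn0 // prime_coprime.
have co_qy : coprime q y := coprime_dvdl q_dvd_x co_xy.
have logn_m : (a * logn q m = a * logn q g + b * logn q x)%N.
  rewrite -lognX eq_m !lognM ?muln_gt0 ?expn_gt0 ?g_gt0 ?x_gt0 //.
  by rewrite !lognX (logn_coprime co_qy) addn0.
rewrite -(Gauss_dvdr _ co_ab) -(dvdn_addr _ (dvdn_mull (logn q g) (dvdnn a))).
by rewrite mulnC -logn_m dvdn_mulr.
Qed.

Definition reduced_rhs (a b : nat) (alpha : nat -> int) (n N : nat) : int :=
  (\sum_(b <= j < a.+1) alpha j * n%:Z ^+ (j - b) * N%:Z ^+ (a - j))%R.

Lemma rhs_scale a b alpha n N g : (b <= a)%N ->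
  rhs a b alpha (n * g) (N * g) =
  (Posz (g ^ a * n ^ b) * reduced_rhs a b alpha n N)%R.
Proof.
move=> le_ba; rewrite /rhs /reduced_rhs mulr_sumr.
apply: eq_big_nat => j /andP[le_bj]; rewrite ltnS => le_ja.
have [k def_j] : exists k, j = (b + k)%N by exists (j - b)%N; rewrite subnKC.
have [l def_a] : exists l, a = (j + l)%N by exists (a - j)%N; rewrite subnKC.
by rewrite def_a addKn def_j addKn !PoszM !PoszX !exprMn !exprD; ring.
Qed.

Lemma reduced_rhs_split a b alpha n N : (b <= a)%N ->
  exists Q : int, reduced_rhs a b alpha n N = (Q * n%:Z + alpha b * N%:Z ^+ (a - b))%R.
Proof.
move=> le_ba; rewrite /reduced_rhs big_ltn ?ltnS // subnn expr0 mulr1 addrC.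
exists (\sum_(b.+1 <= j < a.+1) alpha j * n%:Z ^+ (j - b.+1) * N%:Z ^+ (a - j))%R.
rewrite mulr_suml; congr (_ + _)%R; apply: eq_big_nat => j /andP[lt_bj _].
by rewrite -(subnSK lt_bj) exprS; ring.
Qed.

Lemma coprime_reduced_rhs a b alpha n N : (b <= a)%N -> coprime n N ->
  (`|alpha b| = 1)%R -> coprimez n (reduced_rhs a b alpha n N).
Proof.
move=> le_ba co_nN alpha_unit; have [Q ->] := reduced_rhs_split alpha n N le_ba.
rewrite /coprimez gcdzMDl -/(coprimez _ _) coprimezMr coprimezXr ?coprimezE //.
by move: alpha_unit; rewrite -abszE => -[->]; rewrite coprimen1.
Qed.

Lemma coprime_div_gcd m n : (0 < gcdn m n)%N ->
  coprime (m %/ gcdn m n) (n %/ gcdn m n).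
Proof.
move=> g_gt0; rewrite /coprime -(eqn_pmul2r g_gt0) mul1n muln_gcdl.
by rewrite !divnK ?dvdn_gcdl ?dvdn_gcdr.
Qed.

(* Boolean test for being an a-th power (a base w satisfies w <= x). *)
Definition is_pow (a x : nat) : bool := has (fun w => x == w ^ a)%N (iota 0 x.+1).

Lemma is_powP a x : (0 < a)%N -> reflect (exists w, x = (w ^ a)%N) (is_pow a x).
Proof.
move=> a_gt0; apply: (iffP hasP) => [[w _ /eqP ->]|[w ->]]; first by exists w.
exists w => //; rewrite mem_iota add0n ltnS /=.
by case: w => // w; rewrite -{1}(expn1 w.+1) leq_pexp2l.
Qed.

Lemma coprime_solution_is_pow a b alpha n N g m :
  (0 < b)%N -> (b < a)%N -> coprime a b -> (`|alpha b| = 1)%R ->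
  (0 < g)%N -> (0 < n)%N -> coprime n N -> (0 < m)%N ->
  (m%:Z ^+ a)%R = rhs a b alpha (n * g) (N * g) -> exists w, n = (w ^ a)%N.
Proof.
move=> b_gt0 lt_ba co_ab alpha_unit g_gt0 n_gt0 co_nN m_gt0.
rewrite (rhs_scale _ _ _ _ (ltnW lt_ba)); set P := reduced_rhs _ _ _ _ _ => eq_m.
have P_gt0 : (0 < P)%R.
  have : (0 < m%:Z ^+ a)%R by rewrite exprn_gt0.
  by rewrite eq_m pmulr_rgt0 // ltz_nat muln_gt0 !expn_gt0 g_gt0 n_gt0.
have co_nP : coprime n `|P|%N.
  by have := coprime_reduced_rhs (ltnW lt_ba) co_nN alpha_unit; rewrite coprimezE.
have eq_m_nat : (m ^ a = g ^ a * n ^ b * `|P|)%N.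
  by apply/eqP; rewrite -eqz_nat PoszX PoszM eq_m gtz0_abs.
apply: pow_factor_is_pow eq_m_nat => //; first exact: ltn_trans lt_ba.
by rewrite absz_gt0 gt_eqF.
Qed.

Definition exceptional (a N n : nat) : bool :=
  (1 <= n <= N)%N && is_pow a (n %/ gcdn n N).

Lemma solution_exceptional a b alpha N n m :
  (0 < b)%N -> (b < a)%N -> coprime a b -> (`|alpha b| = 1)%R ->
  (1 <= n <= N)%N -> (0 < m)%N -> (m%:Z ^+ a)%R = rhs a b alpha n N ->
  exceptional a N n.
Proof.
move=> b_gt0 lt_ba co_ab alpha_unit n_range m_gt0 eq_m.
rewrite /exceptional n_range; apply/is_powP; first exact: ltn_trans lt_ba.
have n_gt0 : (0 < n)%N by case/andP: n_range.
have g_gt0 : (0 < gcdn n N)%N by rewrite gcdn_gt0 n_gt0.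
apply: (coprime_solution_is_pow b_gt0 lt_ba co_ab alpha_unit g_gt0 _
          (coprime_div_gcd g_gt0) m_gt0).
  by rewrite divn_gt0 // dvdn_leq // dvdn_gcdl.
by rewrite !divnK ?dvdn_gcdl ?dvdn_gcdr.
Qed.

Definition small_roots (N : nat) : seq nat := [seq w <- iota 1 N | w * w <= N]%N.

Lemma size_small_roots N : (size (small_roots N) ^ 2 <= N)%N.
Proof.
set s := size (small_roots N).
have [->|s_gt0] := posnP s; first by [].
have [w w_root le_sw] : exists2 w, w \in small_roots N & (s <= w)%N.
  apply/hasP/negPn/negP => /hasPn small.
  suff : (s <= size (iota 1 s.-1))%N by rewrite size_iota leqNgt ltn_predL s_gt0.
  apply: uniq_leq_size; first by rewrite filter_uniq // iota_uniq.
  move=> w w_root; have := small w w_root; rewrite -ltnNge => lt_ws.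
  move: w_root; rewrite mem_filter mem_iota => /andP[_ /andP[w_gt0 _]].
  by rewrite mem_iota w_gt0 add1n prednK.
move: w_root; rewrite mem_filter => /andP[le_wwN _].
by apply: leq_trans le_wwN; rewrite expnS expn1 leq_mul.
Qed.

(* An exceptional n is determined by gcd(n, N), a divisor of N, and by the base
   w of the a-th power n / gcd(n, N), which satisfies w^2 <= w^a <= N. *)
Lemma count_exceptional a N : (1 < a)%N ->
  (count (exceptional a N) (iota 1 N) <=
   size (divisors N) * size (small_roots N))%N.
Proof.
move=> a_gt1; rewrite -size_filter.
set E := filter (exceptional a N) (iota 1 N).
pose split_gcd n := (gcdn n N, n %/ gcdn n N)%N.
rewrite -(size_map split_gcd E) -(size_map (expn^~ a) (small_roots N)) -(size_allpairs pair).
apply: uniq_leq_size.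
  rewrite map_inj_in_uniq ?filter_uniq ?iota_uniq // => x y _ _ [eq_g eq_q].
  by rewrite -(divnK (dvdn_gcdl x N)) -(divnK (dvdn_gcdl y N)) eq_q eq_g.
move=> z /mapP[n]; rewrite mem_filter /exceptional => /andP[/andP[n_range pow_q] _] ->.
have /andP[n_gt0 le_nN] := n_range.
have N_gt0 : (0 < N)%N := leq_trans n_gt0 le_nN.
have [w def_q] := is_powP _ (ltnW a_gt1) pow_q.
have q_gt0 : (0 < n %/ gcdn n N)%N by rewrite divn_gt0 ?gcdn_gt0 ?n_gt0 // dvdn_leq // dvdn_gcdl.
have w_gt0 : (0 < w)%N by move: q_gt0; rewrite def_q expn_gt0 (gtn_eqF (ltnW a_gt1)) orbF.
have le_wwN : (w * w <= N)%N.
  apply: leq_trans (leq_trans (leq_div n (gcdn n N)) le_nN); rewrite def_q.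
  by rewrite mulnn leq_pexp2l.
apply/allpairsP; exists (gcdn n N, n %/ gcdn n N)%N; split => //.
  by rewrite -dvdn_divisors // dvdn_gcdr.
apply/mapP; exists w => //; rewrite mem_filter mem_iota w_gt0 le_wwN add1n ltnS /=.
by apply: leq_trans le_wwN; exact: leq_pmulr.
Qed.

(* Two elementary estimates for (k + 1)^3, the cube of the number of divisors
   of a prime power p^k. *)
Lemma cube_le_pow8 k : (k.+1 ^ 3 <= 8 ^ k)%N.
Proof.
elim: k => [|k IH] //; rewrite [8 ^ _.+1]expnS.
by apply: leq_trans (leq_mul (leqnn 8) IH); rewrite !expnS expn0 !muln1; nia.
Qed.

Lemma cube_le_pow2 k : (k.+1 ^ 3 <= 8 * 2 ^ k)%N.
Proof.
elim: k => [|k IH] //; have [le_k3 | lt_3k] := leqP k 3.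
  by case: k le_k3 {IH} => [|[|[|[|]]]].
rewrite [2 ^ _.+1]expnS mulnCA; apply: leq_trans (leq_mul (leqnn 2) IH).
by rewrite !expnS expn0 !muln1; nia.
Qed.

(* The multiplicative defect used in the divisor bound: small primes (< 8)
   cost a factor 8, large ones nothing. *)
Definition weight (q : nat) : nat := if (q < 8)%N then 8 else 1.

Lemma prime_power_weight p k : prime p -> (k.+1 ^ 3 <= weight p * p ^ k)%N.
Proof.
move=> p_prime; rewrite /weight; case: k => [|k]; first by case: ifP.
case: ltnP => [_ | le8p].
  by apply: leq_trans (cube_le_pow2 _) _; rewrite leq_mul2l leq_exp2r ?prime_gt1.
by rewrite mul1n (leq_trans (cube_le_pow8 _)) // leq_exp2r.
Qed.

(* At most eight distinct numbers are below 8, so the defects multiply to at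
   most 8^8. *)
Lemma weight_prod_le s : uniq s -> (\prod_(q <- s) weight q <= 8 ^ 8)%N.
Proof.
move=> s_uniq; have -> : (\prod_(q <- s) weight q = 8 ^ count (fun q => q < 8) s)%N.
  by elim: s {s_uniq} => [|q s IH]; rewrite ?big_nil // big_cons IH /= expnD /weight; case: ifP.
rewrite leq_pexp2l // -size_filter -(size_iota 0 8).
apply: uniq_leq_size; first exact: filter_uniq.
by move=> x; rewrite mem_filter mem_iota => /andP[].
Qed.

Lemma size_divisors_mul_pow p k M : prime p -> coprime p M -> (0 < M)%N ->
  (size (divisors (M * p ^ k)) <= k.+1 * size (divisors M))%N.
Proof.
move=> p_prime co_pM M_gt0.
have Mp_gt0 : (0 < M * p ^ k)%N by rewrite muln_gt0 M_gt0 expn_gt0 prime_gt0.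
rewrite -[k.+1](size_iota 0) -(size_map (expn p) (iota 0 k.+1)) -(size_allpairs muln).
apply: uniq_leq_size; first exact: divisors_uniq.
move=> d; rewrite -dvdn_divisors // => d_dvd.
have [e co_pe def_d] := pfactor_coprime p_prime (dvdn_gt0 Mp_gt0 d_dvd).
apply/allpairsP; exists (p ^ logn p d, e)%N; split.
- apply/mapP; exists (logn p d) => //; rewrite mem_iota add0n ltnS.
  have := dvdn_leq_log p Mp_gt0 d_dvd.
  by rewrite lognM // ?expn_gt0 ?prime_gt0 // (logn_coprime co_pM) pfactorK.
- have co_ep : coprime e (p ^ k) by rewrite coprimeXr // coprime_sym.
  rewrite -dvdn_divisors // -(Gauss_dvdl M co_ep).
  by apply: dvdn_trans d_dvd; rewrite def_d dvdn_mulr.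
- by rewrite /= {1}def_d mulnC.
Qed.

(* Induction on N by splitting off the smallest prime factor. *)
Lemma divisors_cube_weighted N : (0 < N)%N ->
  (size (divisors N) ^ 3 <= (\prod_(q <- primes N) weight q) * N)%N.
Proof.
elim/ltn_ind: N => N IH N_gt0; have [le_N1 | lt_1N] := leqP N 1.
  have -> : N = 1%N by apply/eqP; rewrite eqn_leq le_N1 N_gt0.
  by rewrite big_nil.
have p_prime := pdiv_prime lt_1N; set p := pdiv N in p_prime.
have [M co_pM def_N] := pfactor_coprime p_prime N_gt0; set k := logn p N in def_N.
have M_gt0 : (0 < M)%N by move: N_gt0; rewrite def_N muln_gt0 => /andP[].
have k_gt0 : (0 < k)%N by rewrite logn_gt0 mem_primes p_prime N_gt0 pdiv_dvd.
have lt_MN : (M < N)%N.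
  by rewrite {1}def_N -{1}(muln1 M) ltn_pmul2l // -(expn0 p) ltn_exp2l // prime_gt1.
have primes_N : perm_eq (primes N) (p :: primes M).
  apply: uniq_perm; rewrite /= ?primes_uniq ?andbT.
  - by [].
  - by rewrite mem_primes p_prime M_gt0 /= -prime_coprime.
  move=> q; rewrite def_N primesM // ?expn_gt0 ?prime_gt0 // primesX //.
  by rewrite (primes_prime p_prime) !in_cons in_nil orbF orbC.
rewrite (perm_big _ primes_N) big_cons /=.
apply: leq_trans (_ : (k.+1 * size (divisors M)) ^ 3 <= _)%N.
  by rewrite leq_exp2r // {1}def_N size_divisors_mul_pow.
rewrite expnMn; apply: leq_trans (leq_mul (prime_power_weight k p_prime) (IH M lt_MN M_gt0)) _.
by rewrite def_N; apply: eq_leq; ring.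
Qed.

Lemma divisors_cube N : (0 < N)%N -> (size (divisors N) ^ 3 <= 8 ^ 8 * N)%N.
Proof.
move=> N_gt0; apply: leq_trans (divisors_cube_weighted N_gt0) _.
by rewrite leq_mul2r weight_prod_le ?orbT // primes_uniq.
Qed.

(* Combining: #exceptional^6 <= (d(N)^3)^2 * (sqrt N)^6 <= 8^16 N^5. *)
Lemma count_exceptional_pow6 a N : (1 < a)%N -> (0 < N)%N ->
  (count (exceptional a N) (iota 1 N) ^ 6 <= (8 ^ 8) ^ 2 * N ^ 5)%N.
Proof.
move=> a_gt1 N_gt0.
apply: leq_trans (_ : (size (divisors N) * size (small_roots N)) ^ 6 <= _)%N.
  by rewrite leq_exp2r // count_exceptional.
rewrite expnMn -[(N ^ 5)%N]/(N ^ (2 + 3))%N expnD mulnA -[(_ ^ 2 * N ^ 2)%N]expnMn.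
apply: leq_mul; first by rewrite -[6]/(3 * 2)%N expnM leq_exp2r // divisors_cube.
by rewrite -[6]/(2 * 3)%N expnM leq_exp2r // size_small_roots.
Qed.

(* A bound S^(k+1) <= C N^k forces S <= delta N as soon as N > C / delta^(k+1). *)
Lemma power_bound_eventually (C k : nat) (delta : rat) : (0 < delta)%R ->
  exists N0 : nat, forall N S : nat, (N0 < N)%N ->
    (S ^ k.+1 <= C * N ^ k)%N -> (S%:R <= delta * N%:R)%R.
Proof.
move=> delta_gt0; set K : rat := (C%:R / delta ^+ k.+1)%R.
have K_ge0 : (0 <= K)%R by rewrite divr_ge0 // exprn_ge0 // ltW.
exists (Num.bound K) => N S lt_bN le_SCN; rewrite leNgt; apply/negP => lt_dNS.
have N_gt0 : (0 < N%:R :> rat)%R by rewrite ltr0n (leq_ltn_trans _ lt_bN).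
have : ((delta * N%:R) ^+ k.+1 < C%:R * N%:R ^+ k :> rat)%R.
  apply: lt_le_trans (_ : S%:R ^+ k.+1 <= _)%R.
    by rewrite ltrXn2r // mulr_ge0 // ltW.
  by rewrite -!natrX -natrM ler_nat.
rewrite exprMn (exprS N%:R) mulrA ltr_pM2r ?exprn_gt0 // => lt_dNC.
have : (N%:R < K)%R by rewrite ltr_pdivlMr ?exprn_gt0 // mulrC.
by move/lt_trans/(_ (archi_boundP K_ge0)); rewrite ltr_nat ltnNge ltnW.
Qed.

Theorem mainTheorem6 (a b : nat) (alpha : nat -> int)
  (hb : (1 <= b)%N) (hab : (b < a)%N) (hcop : coprime a b)
  (halpha : (`|alpha b| = 1)%R) :
  forall delta : rat, (0 < delta)%R ->
  exists (Ndelta : nat) (Gamma : nat -> {pred nat}),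
    (forall N : nat, {subset Gamma N <= [pred n | (1 <= n <= N)%N]}) /\
    (forall N : nat, (Ndelta < N)%N ->
       ((count (mem (Gamma N)) (iota 1 N))%:R <= delta * N%:R)%R /\
       (forall n : nat, (1 <= n <= N)%N -> n \notin Gamma N ->
          forall m : nat, (0 < m)%N ->
            (m%:Z ^+ a)%R <> rhs a b alpha n N)).
Proof.
move=> delta delta_gt0.
have [N0 bound_N0] := power_bound_eventually ((8 ^ 8) ^ 2) 5 delta_gt0.
exists N0, (exceptional a); split; first by move=> N n /andP[].
move=> N lt_N0N; split.
  apply: (bound_N0 _ _ lt_N0N); apply: count_exceptional_pow6.
    exact: leq_ltn_trans hab.
  exact: leq_ltn_trans lt_N0N.
move=> n n_range /negP not_exc m m_gt0 eq_m; apply: not_exc.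
exact: solution_exceptional hb hab hcop halpha n_range m_gt0 eq_m.
Qed.
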